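(* Let $\lambda>0$, $f:\mathbb{R}^n\to\mathbb{R}$ twice continuously differentiable, $\varphi=f+\lambda\|\cdot\|_1$, and $x^0$ with $\mathcal{L}_\varphi(x^0)$ bounded and $f$ twice uniformly Lipschitz continuously differentiable on an open neighborhood of it. Suppose that at iteration $k$ of HPGNCM (described in the context) the MEO is invoked and returns a direction with curvature less than or equal to $-\frac12\varepsilon_h$ (so that a negative curvature step is taken). Then $$\varphi(x^k)-\varphi(x^{k+1})>\frac18c_{nc}\min\{\varepsilon_g\varepsilon_h,\varepsilon_h^3\},\qquad c_{nc}=\eta\theta^2\min\Big\{1,\frac{9(1-2\eta)^2}{L_H^2}\Big\}.$$
   Context: $L_H>0$ is such that $f(y)\le f(x)+\nabla f(x)^\top(y-x)+\frac12(y-x)^\top\nabla^2f(x)(y-x)+\frac{L_H}6\|y-x\|^3$ for $x,y\in\mathcal{L}_\varphi(x^0)=\{x:\varphi(x)\le\varphi(x^0)\}$. $\mathcal{G}_t(x):=t(x-\mathrm{prox}_{\frac\lambda t\|\cdot\|_1}(x-\frac1t\nabla f(x)))$; $\mathrm{sgn}(0)=1$; $g(x)_i=(\nabla f(x))_i+\lambda$ ($x_i>0$), $(\nabla f(x))_i-\lambda$ ($x_i<0$), $(\nabla f(x))_i-\min\{\max\{-\lambda,(\nabla f(x))_i\},\lambda\}$ ($x_i=0$). MEO: given symmetric $H$, tolerance $\epsilon$, failure probability $\sigma$, returns either $\hat\lambda\le-\epsilon/2$ and unit $v$ with $v^\top Hv=\hat\lambda$, or a certificate that $\lambda_{\min}(H)\ge-\epsilon$.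 HPGNCM (parameters $0<\varepsilon_g,\varepsilon_h<1$, $\beta>1$, $\bar\eta\in(0,1]$, $\eta\in(0,\frac12)$, $\theta\in(0,1)$, $t_0=1$, $t_k$ the most recently computed step parameter): if $\|\mathcal{G}_{t_k}(x^k)\|>\varepsilon_g$, proximal gradient step $x^{k+1}=\mathrm{prox}_{\frac\lambda{t_k}\|\cdot\|_1}(x^k-\frac1{t_k}\nabla f(x^k))$ with $t_k=\beta^{j_k}$, $j_k$ the smallest nonnegative $j$ with $\varphi(\mathrm{prox}_{\frac\lambda{\beta^j}\|\cdot\|_1}(x^k-\beta^{-j}\nabla f(x^k)))<\varphi(x^k)-\frac{\bar\eta}{\beta^j}\|\mathcal{G}_{\beta^j}(x^k)\|^2$. Otherwise, with $I^k_{\neq0}=\{i:x^k_i\neq0\}$, $I^k_0=\{i:x^k_i=0\}$, $S^k=\mathrm{Diag}(s)$ ($s_i=1$ if $|x^k_i|>\varepsilon_g^{1/2}$, else $s_i=x^k_i$), call MEO with $\epsilon=\varepsilon_h$ on $H_k=S^k_{I^k_{\neq0}}(\nabla^2f(x^k))_{I^k_{\neq0}}S^k_{I^k_{\neq0}}$; on certificate stop; otherwise with the returned unit $u$ ($u^\top H_ku=\lambda_{\min}\le-\varepsilon_h/2$) set $d^k_{I^k_{\neq0}}=-\mathrm{sgn}((g(x^k)_{I^k_{\neq0}})^\top S^k_{I^k_{\neq0}}u)|u^\top H_ku|u$, $d^k_{I^k_0}=0$, and $x^{k+1}=x^k+\theta^{j_k}S^kd^k$ with $j_k$ the smallest nonnegative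 integer $j$ such that $\varphi(x^k+\theta^jS^kd^k)<\varphi(x^k)-\eta\theta^{2j}\|d^k\|^3$. *)

From HB Require Import structures.
From mathcomp Require Import all_boot all_order all_algebra.
From mathcomp Require Import all_classical all_reals all_analysis.
Set Implicit Arguments. Unset Strict Implicit. Unset Printing Implicit Defensive.
Import Order.TTheory GRing.Theory Num.Theory.
Import numFieldNormedType.Exports.
Local Open Scope classical_set_scope.
Local Open Scope ring_scope.

Section HPGNCM.
Variables (R : realType) (n : nat).
Local Notation vec := 'rV[R]_n.

Definition evec (i : 'I_n) : vec := delta_mx 0 i.
Definition dotv (u v : vec) : R := \sum_i u 0 i * v 0 i.
Definition enorm (v : vec) : R := Num.sqrt (dotv v v).
Definition norm1 (v : vec) : R := \sum_i `|v 0 i|.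
Definition frob (M : 'M[R]_n) : R := Num.sqrt (\sum_i \sum_j M i j ^+ 2).
Definition quadf (M : 'M[R]_n) (v : vec) : R := dotv v (v *m M).

Definition grad (f : vec -> R) (x : vec) : vec := \row_i 'D_(evec i) f x.
Definition hess (f : vec -> R) (x : vec) : 'M[R]_n :=
  \matrix_(i, j) 'D_(evec j) ('D_(evec i) f) x.

Definition twice_cont_diff (f : vec -> R) : Prop :=
  (forall x, differentiable f x) /\
  (forall i x, differentiable ('D_(evec i) f) x) /\
  (forall i j, continuous (fun x => hess f x i j)).

Definition phi (f : vec -> R) (lam : R) (x : vec) : R := f x + lam * norm1 x.
Definition level_set (f : vec -> R) (lam : R) (x0 : vec) : set vec :=
  [set x | phi f lam x <= phi f lam x0].

Definition ebounded_set (A : set vec) : Prop :=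
  exists M : R, forall x, A x -> enorm x <= M.

Definition hess_lipschitz_nbhd (f : vec -> R) (A : set vec) : Prop :=
  exists U : set vec, open U /\ A `<=` U /\
    exists L : R, forall x y, U x -> U y ->
      frob (hess f x - hess f y) <= L * enorm (x - y).

Definition cubic_bound (f : vec -> R) (A : set vec) (LH : R) : Prop :=
  forall x y, A x -> A y ->
    f y <= f x + dotv (grad f x) (y - x) + quadf (hess f x) (y - x) / 2
           + LH / 6 * enorm (y - x) ^+ 3.

(* prox_{c ||.||_1}(z) = argmin_p c ||p||_1 + 1/2 ||p - z||^2 (exists, unique) *)
Definition prox_l1 (c : R) (z : vec) : vec :=
  xget 0 [set p | forall y : vec,
    c * norm1 p + enorm (p - z) ^+ 2 / 2 <= c * norm1 y + enorm (y - z) ^+ 2 / 2].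

Definition Gmap (f : vec -> R) (lam t : R) (x : vec) : vec :=
  t *: (x - prox_l1 (lam / t) (x - t^-1 *: grad f x)).

Definition sgn (r : R) : R := if 0 <= r then 1 else -1.

Definition gvec (f : vec -> R) (lam : R) (x : vec) : vec :=
  \row_i (let a := grad f x 0 i in
          if 0 < x 0 i then a + lam
          else if x 0 i < 0 then a - lam
          else a - Num.min (Num.max (- lam) a) lam).

Definition Smat (eg : R) (x : vec) : 'M[R]_n :=
  diag_mx (\row_i (if Num.sqrt eg < `|x 0 i| then 1 else x 0 i)).

(* S ∇²f S on all n coordinates; its rows/columns on I_0 vanish, and its
   restriction to I_{≠0} is H_k *)
Definition Hk (f : vec -> R) (eg : R) (x : vec) : 'M[R]_n :=
  Smat eg x *m hess f x *m Smat eg x.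

Definition pg_cond f lam etab beta (x : vec) (j : nat) : Prop :=
  phi f lam (prox_l1 (lam / beta ^+ j) (x - beta ^- j *: grad f x))
  < phi f lam x - etab / beta ^+ j * enorm (Gmap f lam (beta ^+ j) x) ^+ 2.

Definition pg_step f lam eg etab beta (x : vec) (t : R) (x' : vec) (t' : R) : Prop :=
  eg < enorm (Gmap f lam t x) /\
  exists j : nat, pg_cond f lam etab beta x j /\
    (forall j' : nat, (j' < j)%N -> ~ pg_cond f lam etab beta x j') /\
    t' = beta ^+ j /\
    x' = prox_l1 (lam / t') (x - t'^-1 *: grad f x).

(* negative curvature step: MEO (tolerance eh) returned unit u, supported on
   I_{≠0}, with u H_k u^T = lambda_hat <= - eh / 2 *)
Definition nc_dir f lam eg (x u : vec) : vec :=
  (- sgn (dotv (gvec f lam x) (u *m Smat eg x)) * `|quadf (Hk f eg x) u|) *: u.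

Definition nc_cond f lam eta theta (x : vec) (Sd d : vec) (j : nat) : Prop :=
  phi f lam (x + theta ^+ j *: Sd) < phi f lam x - eta * theta ^+ (2 * j) * enorm d ^+ 3.

Definition nc_step f lam eg eh eta theta (x : vec) (t : R) (x' : vec) (t' : R) : Prop :=
  enorm (Gmap f lam t x) <= eg /\
  exists u : vec,
    enorm u = 1 /\ (forall i, x 0 i = 0 -> u 0 i = 0) /\
    quadf (Hk f eg x) u <= - eh / 2 /\
    let d := nc_dir f lam eg x u in
    let Sd := d *m Smat eg x in
    exists j : nat, nc_cond f lam eta theta x Sd d j /\
      (forall j' : nat, (j' < j)%N -> ~ nc_cond f lam eta theta x Sd d j') /\
      x' = x + theta ^+ j *: Sd /\ t' = t.

Definition hpg_step f lam eg eh etab beta eta theta x t x' t' : Prop :=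
  pg_step f lam eg etab beta x t x' t' \/ nc_step f lam eg eh eta theta x t x' t'.

End HPGNCM.

From HB Require Import structures.
From mathcomp Require Import all_boot all_order all_algebra.
From mathcomp Require Import all_classical all_reals all_analysis.
From mathcomp Require Import ring lra.
Set Implicit Arguments. Unset Strict Implicit. Unset Printing Implicit Defensive.
Import Order.TTheory GRing.Theory Num.Theory.
Import numFieldNormedType.Exports.
Local Open Scope classical_set_scope.
Local Open Scope ring_scope.

(* Along v = S d the l1 term of phi is affine as long as no coordinate of x
   changes sign, which the scaling S guarantees for the steps b with
   b |d| <= sqrt eg.  There phi (x + b v) = K b + lam |x|_1 with
   K b = f (x + b v) + b l, where the sign chosen for d makes K'(0) = <g(x), v>
   nonpositive and K''(0) = v' (hess f x) v = - |d|^3.  The cubic upper bound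
   then gives phi (x + b v) < phi x - eta b^2 |d|^3 whenever L_H b < 3 (1 - 2 eta),
   provided x + b v lies in the level set; since K starts decreasing, an
   intermediate value argument shows that it does.  So the backtracking rejects
   a trial step al only if al >= 3 (1 - 2 eta) / L_H or al |d| > sqrt eg, and
   with |d| = |u' H_k u| >= eh / 2 either case bounds the accepted decrease
   eta theta^(2j) |d|^3 from below by c_nc min (eg eh, eh^3) / 8. *)

Lemma normrD_sg (R : realDomainType) (a w : R) :
  `|w| <= `|a| -> `|a + w| = `|a| + Num.sg a * w.
Proof.
have [wl wr] : - `|w| <= w /\ w <= `|w| by rewrite ler_norm -lerNl -normrN ler_norm.
case: (ltrgt0P a) => [a0 | a0 | ->] wa.
- rewrite gtr0_sg // mul1r; rewrite ger0_norm; lra.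
- rewrite ltr0_sg // mulN1r; rewrite ler0_norm; lra.
- by move: wa; rewrite normr_le0 => /eqP ->; rewrite sgr0 !(add0r, mul0r) normr0.
Qed.

Lemma strict_descent_near0 (R : realType) (K K' : R -> R) (c : R) :
  (forall b : R, is_derive b (1 : R) K (K' b)) -> is_derive (0 : R) (1 : R) K' c ->
  K' 0 <= 0 -> c < 0 ->
  exists2 del : R, 0 < del & forall b, 0 < b <= del -> K b < K 0.
Proof.
move=> dK dK' K'0 c0.
have : h^-1 *: ((K' \o shift 0) (h *: 1) - K' 0) @[h --> 0^'] --> c.
  by have [/cvgP + <-] := dK'.
move=> /cvgr_lt/(_ 0 c0) /nbhs_ballP[e /= e0 He].
have K'_lt0 t : 0 < t < e -> K' t < 0.
  move=> /andP[t0 te]; apply: lt_le_trans K'0.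
  have := He t; rewrite /ball /= sub0r normrN gtr0_norm // => /(_ te (lt0r_neq0 t0)).
  by rewrite /= addr0 [_ *: 1]mulr1 pmulr_rlt0 ?invr_gt0 // subr_lt0.
exists (e / 2) => [|b /andP[b0 be]]; first by rewrite divr_gt0.
have e2 : e / 2 < e by rewrite ltr_pdivrMr // ltr_pMr // ltr1n.
have [xi /andP[xi0 xib] ->] : exists2 xi, 0 < xi < b & K b = K 0 + K' xi * b.
  have [|xi xiI E] := @MVT _ K K' 0 b b0 (fun y _ => dK y).
    apply: continuous_subspaceT => y; apply: differentiable_continuous.
    by apply/derivable1_diffP; case: (dK y).
  by exists xi; [rewrite in_itv /= in xiI | rewrite subr0 in E; lra].
rewrite gtrDl pmulr_llt0 //; apply: K'_lt0.
by rewrite xi0 (lt_le_trans xib) // (le_trans be) // ltW.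
Qed.

Section Euclidean.
Variables (R : realType) (n : nat).
Local Notation vec := 'rV[R]_n.

Lemma dotvZl c (a b : vec) : dotv (c *: a) b = c * dotv a b.
Proof. by rewrite /dotv mulr_sumr; apply: eq_bigr => i _; rewrite mxE mulrA. Qed.

Lemma dotvZr c (a b : vec) : dotv a (c *: b) = c * dotv a b.
Proof. by rewrite /dotv mulr_sumr; apply: eq_bigr => i _; rewrite mxE; ring. Qed.

Lemma enorm_ge0 (w : vec) : 0 <= enorm w.
Proof. exact: sqrtr_ge0. Qed.

Lemma enormZ c (w : vec) : enorm (c *: w) = `|c| * enorm w.
Proof.
by rewrite /enorm dotvZl dotvZr mulrA -expr2 sqrtrM ?sqr_ge0 // sqrtr_sqr.
Qed.

Lemma le_enorm (a b : vec) : (forall i, `|a 0 i| <= `|b 0 i|) -> enorm a <= enorm b.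
Proof.
move=> le_ab; apply: ler_wsqrtr; apply: ler_sum => i _.
rewrite -!expr2 -(real_normK (num_real (a 0 i))) -(real_normK (num_real (b 0 i))).
by rewrite lerXn2r ?nnegrE.
Qed.

Lemma norm_coord_le_enorm (w : vec) i : `|w 0 i| <= enorm w.
Proof.
rewrite /enorm -sqrtr_sqr; apply: ler_wsqrtr.
rewrite /dotv (bigD1 i) //= expr2 lerDl.
by apply: sumr_ge0 => j _; rewrite -expr2 sqr_ge0.
Qed.

Lemma quadf_sum (M : 'M[R]_n) w :
  quadf M w = \sum_i \sum_j w 0 i * w 0 j * M i j.
Proof.
rewrite /quadf /dotv exchange_big /=; apply: eq_bigr => j _.
rewrite mxE mulr_sumr; apply: eq_bigr => i _; ring.
Qed.

Lemma quadfZ (M : 'M[R]_n) c w : quadf M (c *: w) = c ^+ 2 * quadf M w.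
Proof.
rewrite !quadf_sum mulr_sumr; apply: eq_bigr => i _; rewrite mulr_sumr.
by apply: eq_bigr => j _; rewrite !mxE; ring.
Qed.

Lemma quadf_mul_diag (M : 'M[R]_n) (s d : vec) :
  quadf M (d *m diag_mx s) = quadf (diag_mx s *m M *m diag_mx s) d.
Proof.
rewrite !quadf_sum; apply: eq_bigr => i _; apply: eq_bigr => j _.
by rewrite !mul_mx_diag mul_diag_mx !mxE; ring.
Qed.

Lemma norm1_add_sg (x w : vec) : (forall i, `|w 0 i| <= `|x 0 i|) ->
  norm1 (x + w) = norm1 x + \sum_i Num.sg (x 0 i) * w 0 i.
Proof.
move=> wx; rewrite /norm1 -big_split /=; apply: eq_bigr => i _.
by rewrite mxE normrD_sg.
Qed.

End Euclidean.

Section LineDerivatives.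
Variables (R : realType) (n : nat).
Local Notation vec := 'rV[R]_n.

Lemma derive_grad (f : vec -> R) (y v : vec) :
  differentiable f y -> 'D_v f y = dotv (grad f y) v.
Proof.
move=> df; rewrite deriveE // {1}(row_sum_delta v) linear_sum /dotv.
apply: eq_bigr => i _; rewrite linearZ /= mxE -deriveE //.
by rewrite /GRing.scale /= mulrC.
Qed.

Lemma is_derive_line (f : vec -> R) (x v : vec) (b : R) :
  differentiable f (x + b *: v) ->
  is_derive b (1 : R) (fun h : R => f (x + h *: v)) (dotv (grad f (x + b *: v)) v).
Proof.
move=> df; rewrite -derive_grad //.
have quotE : (fun h : R => h^-1 *: (f (x + (h *: 1 + b) *: v) - f (x + b *: v))) =
             (fun h : R => h^-1 *: (f (h *: v + (x + b *: v)) - f (x + b *: v))).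
  apply/funext => h; congr (_ *: (f _ - _)).
  by rewrite [h%:A]mulr1 scalerDl addrCA addrA.
apply: DeriveDef; rewrite /derivable /derive /= quotE //.
exact: diff_derivable.
Qed.

Lemma is_derive_line_grad (f : vec -> R) (x v : vec) :
  (forall i y, differentiable ('D_(evec R i) f) y) ->
  is_derive (0 : R) (1 : R) (fun h : R => dotv (grad f (x + h *: v)) v)
            (quadf (hess f x) v).
Proof.
move=> ddf.
have -> : (fun h : R => dotv (grad f (x + h *: v)) v) =
          \sum_i (fun h : R => v 0 i *: 'D_(evec R i) f (x + h *: v)).
  apply/funext => h; rewrite /dotv fct_sumE; apply: eq_bigr => i _.
  by rewrite mxE /GRing.scale /= mulrC.
have dD i : is_derive (0 : R) (1 : R) (fun h : R => 'D_(evec R i) f (x + h *: v))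
                      (dotv (grad ('D_(evec R i) f) x) v).
  by have := is_derive_line (ddf i (x + 0 *: v)); rewrite scale0r addr0.
apply: (is_derive_eq (is_derive_sum (fun i => is_deriveZ (v 0 i) (dD i)))).
rewrite quadf_sum; apply: eq_bigr => i _.
rewrite /dotv /GRing.scale /= mulr_sumr; apply: eq_bigr => j _.
by rewrite /hess /grad !mxE; ring.
Qed.

Lemma is_derive_line_affine (f : vec -> R) (x v : vec) (l b : R) :
  differentiable f (x + b *: v) ->
  is_derive b (1 : R) (fun h : R => f (x + h *: v) + h * l)
            (dotv (grad f (x + b *: v)) v + l).
Proof.
move=> df; have := is_deriveD (is_derive_line df) (is_deriveZ l (is_derive_id b 1)).
have -> : (fun h : R => f (x + h *: v) + h * l) = (fun h => f (x + h *: v)) + l \*: id.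
  by apply/funext => h; rewrite /= /GRing.scale /= mulrC.
by rewrite /GRing.scale /= mulr1.
Qed.

End LineDerivatives.

Section Scaling.
Variables (R : realType) (n : nat) (eg : R).
Local Notation vec := 'rV[R]_n.

Lemma mulmx_Smat_coord (d x : vec) i :
  (d *m Smat eg x) 0 i = d 0 i * (if Num.sqrt eg < `|x 0 i| then 1 else x 0 i).
Proof. by rewrite /Smat mul_mx_diag !mxE. Qed.

Lemma mulmx_Smat_eq0 (d x : vec) i : x 0 i = 0 -> (d *m Smat eg x) 0 i = 0.
Proof. by move=> x0; rewrite mulmx_Smat_coord x0 normr0 ltNge sqrtr_ge0 mulr0. Qed.

Lemma quadf_mulmx_Smat (f : vec -> R) (d x : vec) :
  quadf (hess f x) (d *m Smat eg x) = quadf (Hk f eg x) d.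
Proof. exact: quadf_mul_diag. Qed.

Hypothesis eg_le1 : eg <= 1.

Lemma norm_Smat_coef_le1 (x : vec) i :
  `|if Num.sqrt eg < `|x 0 i| then 1 else x 0 i| <= 1.
Proof.
case: ifP => [_|/negbT]; first by rewrite normr1.
by rewrite -leNgt => /le_trans; apply; rewrite -sqrtr1 ler_wsqrtr.
Qed.

Lemma enorm_mulmx_Smat (d x : vec) : enorm (d *m Smat eg x) <= enorm d.
Proof.
by apply: le_enorm => i; rewrite mulmx_Smat_coord normrM ler_piMr ?norm_Smat_coef_le1.
Qed.

Lemma norm_scale_Smat_le (d x : vec) b i : 0 <= b -> b * enorm d <= Num.sqrt eg ->
  `|(b *: (d *m Smat eg x)) 0 i| <= `|x 0 i|.
Proof.
move=> b0 bd; have bdi : b * `|d 0 i| <= Num.sqrt eg.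
  by apply: le_trans bd; rewrite ler_wpM2l ?norm_coord_le_enorm.
rewrite mxE mulmx_Smat_coord !normrM (ger0_norm b0) mulrA.
case: ifP => [lt_sx|_]; first by rewrite normr1 mulr1 (le_trans bdi) ?ltW.
apply: ler_piMl => //; apply: le_trans bdi _.
by rewrite -sqrtr1 ler_wsqrtr.
Qed.

End Scaling.

Section SignedGradient.
Variables (R : realType) (n : nat).
Local Notation vec := 'rV[R]_n.

Lemma dotv_gvec (f : vec -> R) lam (x w : vec) : (forall i, x 0 i = 0 -> w 0 i = 0) ->
  dotv (gvec f lam x) w = dotv (grad f x) w + lam * \sum_i Num.sg (x 0 i) * w 0 i.
Proof.
move=> wx; rewrite /dotv mulr_sumr -big_split /=; apply: eq_bigr => i _.
rewrite /gvec !mxE /=.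
case: (ltrgt0P (x 0 i)) => [x0 | x0 | x0].
- by rewrite gtr0_sg //; ring.
- by rewrite ltr0_sg //; ring.
- by rewrite wx // !mulr0 addr0.
Qed.

Lemma sgn_mul_self (r : R) : sgn r * r = `|r|.
Proof.
rewrite /sgn; case: ifP => [/ger0_norm -> | /negbT]; first by rewrite mul1r.
by rewrite -ltNge => /ltr0_norm ->; rewrite mulN1r.
Qed.

Lemma normr_sgn (r : R) : `|sgn r| = 1.
Proof. by rewrite /sgn; case: ifP; rewrite ?normrN normr1. Qed.

End SignedGradient.

Section NegativeCurvatureDirection.
Variables (R : realType) (n : nat) (f : 'rV[R]_n -> R) (lam eg : R) (x u : 'rV[R]_n).
Local Notation lh := (quadf (Hk f eg x) u).
Local Notation d := (nc_dir f lam eg x u).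

Lemma enorm_nc_dir : enorm u = 1 -> enorm d = `|lh|.
Proof. by move=> u1; rewrite enormZ u1 mulr1 normrM normrN normr_sgn mul1r normr_id. Qed.

Lemma quadf_nc_dir : quadf (Hk f eg x) d = lh ^+ 3.
Proof.
rewrite quadfZ exprMn sqrrN -[sgn _ ^+ 2]real_normK ?num_real // normr_sgn.
by rewrite expr1n mul1r real_normK ?num_real // -exprSr.
Qed.

Lemma dotv_gvec_nc_dir_le0 : dotv (gvec f lam x) (d *m Smat eg x) <= 0.
Proof.
by rewrite -scalemxAl dotvZr !mulNr mulrAC sgn_mul_self oppr_le0 mulr_ge0.
Qed.

End NegativeCurvatureDirection.

Section CubicDescent.
Variables (R : realType) (n : nat) (f : 'rV[R]_n -> R) (lam : R) (x0 : 'rV[R]_n).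
Variables (LH eta : R).
Hypotheses (LH_gt0 : 0 < LH) (eta_ge0 : 0 <= eta).
Hypothesis cubic : cubic_bound f (level_set f lam x0) LH.
Hypotheses (df : forall y, differentiable f y)
           (ddf : forall i y, differentiable ('D_(evec R i) f) y).
Variables (x v : 'rV[R]_n) (l mu B : R).
Hypotheses (x_lvl : level_set f lam x0 x) (mu_gt0 : 0 < mu) (v_le : enorm v <= mu).
Hypotheses (quadf_v : quadf (hess f x) v = - mu ^+ 3)
           (slope_le0 : dotv (grad f x) v + l <= 0).
Hypothesis phi_line : forall b, 0 <= b -> b * mu <= B ->
  phi f lam (x + b *: v) = f (x + b *: v) + b * l + lam * norm1 x.

Lemma cubic_line_decrease b : 0 < b -> LH * b < 3 * (1 - 2 * eta) -> b * mu <= B ->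
  level_set f lam x0 (x + b *: v) ->
  phi f lam (x + b *: v) < phi f lam x - eta * b ^+ 2 * mu ^+ 3.
Proof.
move=> b0 bLH bB y_lvl.
have step : x + b *: v - x = b *: v by rewrite addrAC subrr add0r.
have := cubic x_lvl y_lvl; rewrite step dotvZr quadfZ enormZ quadf_v gtr0_norm // => model.
have slope : b * dotv (grad f x) v + b * l <= 0 by rewrite -mulrDr mulr_ge0_le0 // ltW.
have cube : LH / 6 * (b * enorm v) ^+ 3 <= LH / 6 * (b * mu) ^+ 3.
  apply: ler_wpM2l; first by rewrite divr_ge0 ?ltW.
  have [b_ge0 mu_ge0] := (ltW b0, ltW mu_gt0).
  by rewrite lerXn2r ?nnegrE ?mulr_ge0 ?enorm_ge0 // ler_wpM2l.
have BA0 : 0 < b ^+ 2 * mu ^+ 3 by rewrite mulr_gt0 ?exprn_gt0.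
have remainder : LH / 6 * (b * mu) ^+ 3 < (1 - 2 * eta) / 2 * (b ^+ 2 * mu ^+ 3).
  rewrite (_ : LH / 6 * _ = LH * b / 6 * (b ^+ 2 * mu ^+ 3)); last by ring.
  by rewrite ltr_pM2r //; lra.
have E1 : b ^+ 2 * - mu ^+ 3 / 2 = - (b ^+ 2 * mu ^+ 3) / 2 by ring.
have E2 : eta * b ^+ 2 * mu ^+ 3 = eta * (b ^+ 2 * mu ^+ 3) by ring.
rewrite (phi_line (ltW b0) bB) /phi E2; rewrite E1 in model.
move: (b ^+ 2 * mu ^+ 3) BA0 model remainder => BA; lra.
Qed.

Lemma line_phi_lt b : 0 < b -> LH * b < 3 * (1 - 2 * eta) -> b * mu <= B ->
  phi f lam (x + b *: v) < phi f lam x.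
Proof.
move=> b0 bLH bB.
pose K h := f (x + h *: v) + h * l.
have dK h : is_derive h (1 : R) K (dotv (grad f (x + h *: v)) v + l).
  exact: is_derive_line_affine.
have dK' : is_derive (0 : R) (1 : R) (fun h => dotv (grad f (x + h *: v)) v + l)
                     (quadf (hess f x) v).
  have := is_deriveD (is_derive_line_grad x v ddf) (is_derive_cst l (0 : R) 1).
  by rewrite addr0.
have [del del0 K_lt] : exists2 del : R, 0 < del & forall h, 0 < h <= del -> K h < K 0.
  apply: strict_descent_near0 dK dK' _ _; first by rewrite scale0r addr0.
  by rewrite quadf_v oppr_lt0 exprn_gt0.
have phiK h : 0 <= h <= b -> phi f lam (x + h *: v) = K h + lam * norm1 x.
  move=> /andP[h0 hb]; rewrite phi_line //.
  by apply: le_trans bB; rewrite ler_wpM2r // ltW.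
have phix : phi f lam x = K 0 + lam * norm1 x.
  by rewrite /K scale0r addr0 mul0r addr0.
(* The cubic bound only holds on the level set.  If K b >= K 0, then K, which
   starts decreasing, returns to K 0 at some g in (0, b]; there x + g v is in
   the level set and the cubic bound contradicts K g = K 0. *)
rewrite phiK ?(ltW b0) ?lexx // phix ltrD2r ltNge; apply/negP => Kb.
pose b' := Num.min del b.
have b'0 : 0 < b' by rewrite lt_min del0 b0.
have b'b : b' <= b by rewrite ge_min lexx orbT.
have Kb' : K b' < K 0 by apply: K_lt; rewrite b'0 ge_min lexx.
have [g] : exists2 g, g \in `[b', b] & K g = K 0.
  apply: IVT b'b _ _; last by rewrite ge_min le_max (ltW Kb') Kb orbT.
  apply: continuous_subspaceT => y; apply: differentiable_continuous.
  by apply/derivable1_diffP; case: (dK y).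
rewrite in_itv /= => /andP[b'g gb] Kg.
have g0 : 0 < g by apply: lt_le_trans b'g.
have phig : phi f lam (x + g *: v) = phi f lam x by rewrite phiK ?(ltW g0) ?gb // Kg phix.
have gLH : LH * g < 3 * (1 - 2 * eta) by exact: le_lt_trans (ler_wpM2l (ltW LH_gt0) gb) bLH.
have gB : g * mu <= B by exact: le_trans (ler_wpM2r (ltW mu_gt0) gb) bB.
have := cubic_line_decrease g0 gLH gB; rewrite /level_set /= phig => /(_ x_lvl).
have [g_ge0 mu_ge0] := (ltW g0, ltW mu_gt0).
have : 0 <= eta * g ^+ 2 * mu ^+ 3 by rewrite !mulr_ge0 ?exprn_ge0.
lra.
Qed.

Lemma line_descent b : 0 < b -> LH * b < 3 * (1 - 2 * eta) -> b * mu <= B ->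
  phi f lam (x + b *: v) < phi f lam x - eta * b ^+ 2 * mu ^+ 3.
Proof.
move=> b0 bLH bB; apply: cubic_line_decrease => //.
exact: le_trans (ltW (line_phi_lt b0 bLH bB)) x_lvl.
Qed.

End CubicDescent.

Lemma nc_dir_descent (R : realType) (n : nat) (f : 'rV[R]_n -> R) (lam : R)
    (x0 x u : 'rV[R]_n) (LH eg eta : R) :
  twice_cont_diff f -> 0 < LH -> 0 <= eta -> cubic_bound f (level_set f lam x0) LH ->
  eg <= 1 -> level_set f lam x0 x -> enorm u = 1 -> quadf (Hk f eg x) u < 0 ->
  let d := nc_dir f lam eg x u in
  forall b, 0 < b -> LH * b < 3 * (1 - 2 * eta) -> b * enorm d <= Num.sqrt eg ->
  phi f lam (x + b *: (d *m Smat eg x)) < phi f lam x - eta * b ^+ 2 * enorm d ^+ 3.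
Proof.
move=> [df [ddf _]] LH_gt0 eta_ge0 cubic eg_le1 x_lvl u1 lh_lt0 d.
set v := d *m Smat eg x.
have supp_v i : x 0 i = 0 -> v 0 i = 0 by exact: mulmx_Smat_eq0.
have mu_gt0 : 0 < enorm d by rewrite enorm_nc_dir // normr_gt0 ltr0_neq0.
pose l := lam * \sum_i Num.sg (x 0 i) * v 0 i.
have v_le : enorm v <= enorm d by exact: enorm_mulmx_Smat.
have quadf_v : quadf (hess f x) v = - enorm d ^+ 3.
  by rewrite quadf_mulmx_Smat quadf_nc_dir enorm_nc_dir // ltr0_norm // exprNn; ring.
have slope_le0 : dotv (grad f x) v + l <= 0.
  by rewrite -dotv_gvec //; exact: dotv_gvec_nc_dir_le0.
have phi_line b : 0 <= b -> b * enorm d <= Num.sqrt eg ->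
    phi f lam (x + b *: v) = f (x + b *: v) + b * l + lam * norm1 x.
  move=> b0 bB; rewrite /phi norm1_add_sg => [|i]; last exact: norm_scale_Smat_le.
  under eq_bigr => i _ do rewrite mxE mulrCA.
  by rewrite -mulr_sumr /l; ring.
move=> b; exact: (line_descent LH_gt0 eta_ge0 cubic df ddf x_lvl mu_gt0 v_le quadf_v
                                slope_le0 phi_line (b := b)).
Qed.

(* al is the last rejected trial theta ^+ j.-1, or 1 when theta ^+ 0 is accepted. *)
Lemma backtracking_last_rejected (R : numDomainType) (theta : R) (good : pred R) (j : nat) :
  0 <= theta <= 1 -> (forall i, (i < j)%N -> ~~ good (theta ^+ i)) ->
  exists al, [/\ 0 <= al, theta * al <= theta ^+ j & 1 <= al \/ ~~ good al].
Proof.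
move=> /andP[th0 th1]; case: j => [_ | j rejected].
  by exists 1; rewrite ler01 mulr1 expr0 lexx th1; split => //; left.
exists (theta ^+ j); rewrite exprn_ge0 // exprS lexx; split => //.
by right; apply: rejected.
Qed.

Lemma rejected_step_lower_bound (R : rcfType) (LH eta eg eh mu al : R) :
  0 < LH -> eta <= 1 / 2 -> 0 < eg -> 0 < eh -> eh / 2 <= mu -> 0 <= al ->
  1 <= al \/ ~~ ((LH * al < 3 * (1 - 2 * eta)) && (al * mu <= Num.sqrt eg)) ->
  Num.min 1 (9 * (1 - 2 * eta) ^+ 2 / LH ^+ 2) * Num.min (eg * eh) (eh ^+ 3) / 8
    <= al ^+ 2 * mu ^+ 3.
Proof.
move=> LH0 eta_half eg0 eh0 mu_eh al0 rejected.
set m1 := Num.min 1 _; set m2 := Num.min _ _.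
have mu0 : 0 < mu by apply: lt_le_trans mu_eh; rewrite divr_gt0.
have [eg_ge0 eh_ge0 mu_ge0] := And3 (ltW eg0) (ltW eh0) (ltW mu0).
have m1_ge0 : 0 <= m1.
  rewrite le_min ler01 /=; apply: divr_ge0; last exact: sqr_ge0.
  by apply: mulr_ge0; [exact: ler0n | exact: sqr_ge0].
have m1_le1 : m1 <= 1 by rewrite ge_min lexx.
have m2_ge0 : 0 <= m2 by rewrite le_min mulr_ge0 ?exprn_ge0.
have m2_egeh : m2 <= eg * eh by rewrite ge_min lexx.
have m2_eh3 : m2 <= eh ^+ 3 by rewrite ge_min lexx orbT.
have mu3 : eh ^+ 3 / 8 <= mu ^+ 3.
  rewrite (_ : eh ^+ 3 / 8 = (eh / 2) ^+ 3); last by field.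
  by rewrite lerXn2r ?nnegrE ?divr_ge0.
have m1m2 : m1 * m2 / 8 <= m2 / 8 by rewrite ler_pM2r ?invr_gt0 ?ltr0n // ler_piMl.
case: rejected => [al1 | ]; last rewrite negb_and -leNgt -ltNge => /orP[].
- have : mu ^+ 3 <= al ^+ 2 * mu ^+ 3.
    by apply: ler_peMl; [exact: exprn_ge0 | exact: exprn_ege1].
  lra.
- move=> a3_le.
  have a3_sq : 9 * (1 - 2 * eta) ^+ 2 / LH ^+ 2 <= al ^+ 2.
    rewrite ler_pdivrMr ?exprn_gt0 // -exprMn.
    rewrite (_ : 9 * _ = (3 * (1 - 2 * eta)) ^+ 2); last by ring.
    have a3_ge0 : 0 <= 3 * (1 - 2 * eta) by lra.
    by rewrite [al * LH]mulrC !expr2 ler_pM.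
  have m1_al : m1 <= al ^+ 2 by apply: le_trans a3_sq; rewrite ge_min lexx orbT.
  have : m1 * mu ^+ 3 <= al ^+ 2 * mu ^+ 3 by rewrite ler_wpM2r ?exprn_ge0.
  have : m1 * m2 <= m1 * (8 * mu ^+ 3) by rewrite ler_wpM2l //; lra.
  lra.
- move=> lt_eg.
  have eg_lt : eg < (al * mu) ^+ 2.
    by rewrite -(sqr_sqrtr eg_ge0) ltrXn2r ?nnegrE ?mulr_ge0 ?sqrtr_ge0.
  have : eg * mu <= al ^+ 2 * mu ^+ 3.
    by rewrite (_ : al ^+ 2 * _ = (al * mu) ^+ 2 * mu); [rewrite ler_wpM2r // ltW | ring].
  have : eg * eh <= eg * (2 * mu) by rewrite ler_wpM2l //; lra.
  lra.
Qed.

Section LevelSet.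
Variables (R : realType) (n : nat) (f : 'rV[R]_n -> R) (lam eg eh etab beta eta theta : R).
Hypotheses (etab_ge0 : 0 <= etab) (beta_gt1 : 1 < beta).
Hypotheses (eta_ge0 : 0 <= eta) (theta_ge0 : 0 <= theta).

Lemma hpg_step_phi_le (x x' : 'rV[R]_n) t t' :
  hpg_step f lam eg eh etab beta eta theta x t x' t' -> phi f lam x' <= phi f lam x.
Proof.
have beta_ge0 : 0 <= beta by apply: le_trans (ltW beta_gt1).
case=> [[_ [j [accepted [_ [-> ->]]]]] | [_ [u [_ [_ [_ [j [accepted [_ [-> _]]]]]]]]]].
  apply/ltW/(lt_le_trans accepted); rewrite gerBl.
  by apply: mulr_ge0; [apply: divr_ge0; last apply: exprn_ge0 | apply: sqr_ge0].
apply/ltW/(lt_le_trans accepted); rewrite gerBl.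
by apply: mulr_ge0; [apply: mulr_ge0; last apply: exprn_ge0 | apply/exprn_ge0/enorm_ge0].
Qed.

Lemma hpg_iterates_in_level_set (x : nat -> 'rV[R]_n) (t : nat -> R) k :
  (forall i, (i < k)%N -> hpg_step f lam eg eh etab beta eta theta (x i) (t i) (x i.+1) (t i.+1)) ->
  level_set f lam (x 0%N) (x k).
Proof.
elim: k => [|k IH] steps; first exact: lexx.
apply: le_trans (IH _) => [|i ik]; last by apply: steps; rewrite ltnS ltnW.
exact: hpg_step_phi_le (steps k (ltnSn k)).
Qed.

End LevelSet.

Theorem lemma6 (R : realType) (n : nat) (f : 'rV[R]_n -> R) (lam : R)
  (x0 : 'rV[R]_n) (LH eg eh beta etab eta theta : R)
  (x : nat -> 'rV[R]_n) (t : nat -> R) (k : nat) :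
  0 < lam -> twice_cont_diff f ->
  ebounded_set (level_set f lam x0) ->
  hess_lipschitz_nbhd f (level_set f lam x0) ->
  0 < LH -> cubic_bound f (level_set f lam x0) LH ->
  0 < eg < 1 -> 0 < eh < 1 -> 1 < beta -> 0 < etab <= 1 ->
  0 < eta < 1 / 2 -> 0 < theta < 1 ->
  x 0%N = x0 -> t 0%N = 1 ->
  (forall i : nat, (i < k)%N ->
     hpg_step f lam eg eh etab beta eta theta (x i) (t i) (x i.+1) (t i.+1)) ->
  nc_step f lam eg eh eta theta (x k) (t k) (x k.+1) (t k.+1) ->
  phi f lam (x k) - phi f lam (x k.+1) >
  1 / 8 * (eta * theta ^+ 2 * Num.min 1 (9 * (1 - 2 * eta) ^+ 2 / LH ^+ 2))
        * Num.min (eg * eh) (eh ^+ 3).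
Proof.
(* Boundedness of the level set and the Lipschitz Hessian only serve, in the
   paper, to produce L_H; here the cubic bound is assumed directly. *)
move=> _ f_C2 _ _ LH_gt0 cubic /andP[eg_gt0 eg_lt1] /andP[eh_gt0 _] beta_gt1
  /andP[etab_gt0 _] /andP[eta_gt0 eta_lt] /andP[theta_gt0 theta_lt1] x_init _ steps
  [_ [u [u1 [_ [lh_le nc]]]]].
have [j [accepted [rejected [-> _]]]] := nc.
set d := nc_dir f lam eg (x k) u in accepted rejected *.
have x_lvl : level_set f lam x0 (x k).
  by rewrite -x_init; apply: hpg_iterates_in_level_set steps; rewrite ?ltW.
have lh_lt0 : quadf (Hk f eg (x k)) u < 0 by apply: le_lt_trans lh_le _; lra.
have mu_eh : eh / 2 <= enorm d by rewrite enorm_nc_dir // ltr0_norm //; lra.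
have descent := nc_dir_descent f_C2 LH_gt0 (ltW eta_gt0) cubic (ltW eg_lt1) x_lvl u1 lh_lt0.
pose good al := (LH * al < 3 * (1 - 2 * eta)) && (al * enorm d <= Num.sqrt eg).
have [al [al_ge0 al_le last_rejected]] :
    exists al, [/\ 0 <= al, theta * al <= theta ^+ j & 1 <= al \/ ~~ good al].
  apply: backtracking_last_rejected => [|i ij]; first by rewrite !ltW.
  apply/negP => /andP[iLH iB]; apply: (rejected i ij).
  by rewrite /nc_cond mulnC exprM; apply: descent; rewrite ?exprn_gt0.
have := rejected_step_lower_bound LH_gt0 (ltW eta_lt) eg_gt0 eh_gt0 mu_eh al_ge0 last_rejected.
set m1 := Num.min 1 _; set m2 := Num.min _ _ => bound.
have theta_ge0 := ltW theta_gt0.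
have steps_sq : (theta * al) ^+ 2 <= (theta ^+ j) ^+ 2.
  by rewrite lerXn2r ?nnegrE ?mulr_ge0 ?exprn_ge0.
have := ler_wpM2l (mulr_ge0 (ltW eta_gt0) (exprn_ge0 2 theta_ge0)) bound.
have := ler_wpM2l (ltW eta_gt0) (ler_wpM2r (exprn_ge0 3 (enorm_ge0 d)) steps_sq).
move: accepted; rewrite /nc_cond mulnC exprM.
lra.
Qed.
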